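(* Let $G=(V,E)$ be a finite simple graph with $n$ vertices, $e$ edges, minimum degree $\delta \geq 1$, maximum degree $\Delta$, and independence number $\beta$. Then each of the following five inequalities holds, and in each of them equality holds if and only if $G$ is a regular balanced bipartite graph: [1] $$Z_1(G) \leq (n - \beta) \Delta^2 + \frac{e^2}{2 \beta} + \frac{\beta \Delta^3}{2 \delta};$$ [2] $$F(G) \geq (n - \beta) \delta^3 + \frac{\delta (2 \beta^2 \delta^2 - e^2)}{\beta};$$ [3] $$F(G) \geq (n - \beta) \delta^3 + \frac{\delta}{\beta} \left( 2 \beta \left(\beta \delta^2 + \frac{e^2}{n - \beta}\right) - e^2 - 2 \beta (n - \beta) \Delta^2\right);$$ [4] $$Inv(G) \geq \frac{n - \beta}{\Delta} + \frac{2 \beta^2 \delta^2 - e^2}{\beta \Delta^3};$$ [5] $$Inv(G) \geq \frac{n - \beta}{\Delta} + \frac{1}{\beta \Delta^3} \left( 2 \beta \left(\beta \delta^2 + \frac{e^2}{n - \beta}\right) - e^2 - 2 \beta (n - \beta) \Delta^2\right).$$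
   Context: Graphs are finite, undirected, without loops or multiple edges. $d(u)$ denotes the degree of vertex $u$; $\delta$ and $\Delta$ are the minimum and maximum degrees. The independence number $\beta$ is the maximum size of a set of pairwise nonadjacent vertices. The first Zagreb index is $Z_1(G)=\sum_{u\in V} d(u)^2$, the forgotten topological index is $F(G)=\sum_{u\in V} d(u)^3$, and (when $\delta\ge 1$) the inverse degree is $Inv(G)=\sum_{u\in V}\frac{1}{d(u)}$. A regular balanced bipartite graph is a bipartite graph whose two parts have equal size and in which all vertices have the same degree. *)

From HB Require Import structures.
From mathcomp Require Import all_boot all_order all_algebra.
Set Implicit Arguments. Unset Strict Implicit. Unset Printing Implicit Defensive.
Import Order.TTheory GRing.Theory Num.Theory.

Section Graph.
Variables (T : finType) (e : rel T).

Definition simple_graph : Prop := symmetric e /\ irreflexive e.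

Definition deg (u : T) : nat := #|[set v | e u v]|.

Definition nverts : nat := #|T|.

Definition edges : {set {set T}} :=
  [set E : {set T} | [exists x : T, exists y : T, e x y && (E == [set x; y])]].
Definition nedges : nat := #|edges|.

(* minimum degree (the default value #|T| only matters for the empty graph,
   where it gives 0) and maximum degree *)
Definition mindeg : nat := \big[minn/#|T|]_(u : T) deg u.
Definition maxdeg : nat := \max_(u : T) deg u.

Definition independent (S : {set T}) : bool :=
  [forall x in S, forall y in S, ~~ e x y].

Definition indep_number : nat := \max_(S : {set T} | independent S) #|S|.

Definition regular : Prop := forall u v : T, deg u = deg v.

Definition balanced_bipartite : Prop :=
  exists A B : {set T},
    [/\ A :&: B = set0, A :|: B = [set: T], #|A| = #|B| &
        forall x y, e x y -> (x \in A /\ y \in B) \/ (x \in B /\ y \in A)].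

Definition regular_balanced_bipartite : Prop :=
  balanced_bipartite /\ regular.

Local Open Scope ring_scope.
Variable R : realFieldType.

Definition zagreb1 : R := \sum_(u : T) ((deg u)%:R) ^+ 2.
Definition forgotten : R := \sum_(u : T) ((deg u)%:R) ^+ 3.
Definition inv_degree : R := \sum_(u : T) ((deg u)%:R)^-1.

End Graph.

From mathcomp Require Import all_boot all_order all_algebra.
From mathcomp Require Import zify ring lra.
Import Order.TTheory GRing.Theory Num.Theory.

(* Let S be a maximum independent set, so |S| = beta.  Every edge has at most
   one end in S, hence the degrees on S sum to at most e, and by the handshake
   lemma those off S sum to at least e, with equality exactly when V \ S is
   independent too.  With delta <= d(u) <= Delta, splitting each degree sum
   along S leaves a slack that is a sum of non-negative terms, e.g.
   (e - beta Delta)^2 / (2 beta) + beta Delta^2 (Delta - delta) / (2 delta)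
   for Z_1; bounds [3] and [5] fall short of [2] and [4] by a non-negative
   multiple of (n - beta) Delta - e.  Equality forces every degree to be delta
   and e = beta delta, which characterises regular balanced bipartite graphs. *)

Set Implicit Arguments.
Unset Strict Implicit.
Unset Printing Implicit Defensive.

Lemma bigID_setC (R : Type) (idx : R) (op : Monoid.com_law idx)
    (I : finType) (A : {set I}) (F : I -> R) :
  \big[op/idx]_i F i = op (\big[op/idx]_(i in A) F i) (\big[op/idx]_(i in ~: A) F i).
Proof. by rewrite (bigID [in A]); congr (op _ _); apply: eq_bigl => i; rewrite inE. Qed.

Section Graph.
Variables (T : finType) (e : rel T).

Lemma mindeg_le_deg u : mindeg e <= deg e u.
Proof.
rewrite /mindeg; move: (mem_index_enum u); elim: (index_enum T) => // v s IH.
rewrite inE big_cons => /predU1P[<- | /IH]; first exact: geq_minl.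
exact: leq_trans (geq_minr _ _).
Qed.

Lemma leq_mindeg k : k <= #|T| -> (forall u, k <= deg e u) -> k <= mindeg e.
Proof.
by move=> kT k_deg; apply: (big_ind (fun j => k <= j)) => // i j; rewrite leq_min => ->.
Qed.

Lemma mindeg_le_card : mindeg e <= #|T|.
Proof.
apply: (big_ind (fun j => j <= #|T|)) => // [i j i_le _ | u _].
  by rewrite geq_min i_le.
exact: max_card.
Qed.

Lemma leq_maxdeg u : deg e u <= maxdeg e.
Proof. exact: leq_bigmax. Qed.

Lemma maxdeg_attained : 0 < #|T| -> exists u, deg e u = maxdeg e.
Proof. by move=> T_gt0; have [u max_u] := bigop.eq_bigmax (deg e) T_gt0; exists u. Qed.

Lemma independentP (S : {set T}) :
  reflect {in S &, forall x y, ~~ e x y} (independent e S).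
Proof.
apply: (iffP forall_inP) => [S_indep x y xS yS | S_indep x xS].
  exact: forall_inP (S_indep x xS) y yS.
by apply/forall_inP => y; apply: S_indep.
Qed.

Lemma leq_indep_number (S : {set T}) : independent e S -> #|S| <= indep_number e.
Proof. exact: leq_bigmax_cond. Qed.

Lemma indep_number_attained : exists2 S, independent e S & #|S| = indep_number e.
Proof.
have set0_indep : independent e set0 by apply/independentP => x; rewrite inE.
have [|S S_indep max_S] :=
    bigop.eq_bigmax_cond (fun S : {set T} => #|S|) (A := independent e).
  by apply/card_gt0P; exists set0.
by exists S => //; apply: esym.
Qed.

Definition narcs (A B : {set T}) : nat := \sum_(u in A) \sum_(v in B) e u v.

Lemma deg_sum u : deg e u = \sum_v e u v.
Proof. by rewrite /deg -sum1dep_card big_mkcond. Qed.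

Lemma sum_deg_narcs (A B : {set T}) :
  \sum_(u in A) deg e u = narcs A B + narcs A (~: B).
Proof.
by rewrite /narcs -big_split; apply: eq_bigr => u _; rewrite deg_sum (bigID_setC _ B).
Qed.

Lemma narcs_eq0 (A : {set T}) : (narcs A A == 0) = independent e A.
Proof.
rewrite /narcs sum_nat_eq0; apply: eq_forallb_in => u _.
by rewrite sum_nat_eq0; apply: eq_forallb_in => v _; case: (e u v).
Qed.

Hypotheses (e_sym : symmetric e) (e_irr : irreflexive e).

Lemma narcsC (A B : {set T}) : narcs A B = narcs B A.
Proof.
rewrite /narcs exchange_big; apply: eq_bigr => u _.
by apply: eq_bigr => v _; rewrite e_sym.
Qed.

Lemma handshake : \sum_u deg e u = 2 * nedges e.
Proof.
have -> : \sum_u deg e u = \sum_(p | e p.1 p.2) 1.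
  rewrite (eq_bigr (fun u => \sum_(v | e u v) 1)) => [|u _].
    by rewrite pair_big_dep.
  by rewrite sum1dep_card.
(* each edge {x, y} is the image of exactly the two arcs (x, y) and (y, x) *)
rewrite (partition_big (fun p => [set p.1; p.2]) [in edges e]) => [|[x y] xy]; last first.
  by rewrite inE; apply/existsP; exists x; apply/existsP; exists y; rewrite xy eqxx.
rewrite /nedges mulnC -sum_nat_const; apply: eq_bigr => E.
rewrite inE => /existsP[x /existsP[y /andP[xy /eqP->]]].
have x_neq_y : x != y by apply: contraTneq xy => ->; rewrite e_irr.
rewrite sum1dep_card (_ : [set p | _] = [set (x, y); (y, x)]).
  by rewrite cards2 xpair_eqE (negbTE x_neq_y).
apply/setP => -[a b]; rewrite !inE /= !xpair_eqE.
apply/idP/idP => [/andP[ab /eqP ab_xy] | /orP[]/andP[/eqP-> /eqP->]].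
- have : a \in [set x; y] by rewrite -ab_xy set21.
  have : b \in [set x; y] by rewrite -ab_xy set22.
  move: ab; rewrite !inE => ab /orP[]/eqP b_eq /orP[]/eqP a_eq;
    by move: ab; rewrite a_eq b_eq ?e_irr // !eqxx ?orbT.
- by rewrite xy eqxx.
- by rewrite e_sym xy setUC eqxx.
Qed.

Lemma sum_deg_indep (S : {set T}) : independent e S ->
  2 * \sum_(u in S) deg e u + narcs (~: S) (~: S) = 2 * nedges e.
Proof.
move=> S_indep; have /eqP S_in : narcs S S == 0 by rewrite narcs_eq0.
have S_out : \sum_(u in S) deg e u = narcs S (~: S) by rewrite (sum_deg_narcs S S) S_in.
have C_out : \sum_(u in ~: S) deg e u = narcs (~: S) (~: S) + narcs (~: S) S.
  by rewrite (sum_deg_narcs _ (~: S)) setCK.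
rewrite -handshake (bigID_setC _ S) /= S_out C_out (narcsC (~: S) S); lia.
Qed.

Lemma sum_deg_indep_le (S : {set T}) :
  independent e S -> \sum_(u in S) deg e u <= nedges e.
Proof. by move/sum_deg_indep; lia. Qed.

Lemma indep_setC (S : {set T}) : independent e S ->
  \sum_(u in S) deg e u = nedges e -> independent e (~: S).
Proof. by move=> /sum_deg_indep S_arcs S_eq; rewrite -narcs_eq0; lia. Qed.

Lemma regular_mindeg : regular e -> forall u, deg e u = mindeg e.
Proof.
move=> reg u; apply/anti_leq; rewrite mindeg_le_deg andbT.
by apply: leq_mindeg => [|v]; rewrite ?max_card ?(reg u v).
Qed.

Lemma sum_deg_const k (A : {set T}) :
  (forall u, deg e u = k) -> \sum_(u in A) deg e u = #|A| * k.
Proof. by move=> deg_k; rewrite (eq_bigr (fun=> k)) ?sum_nat_const. Qed.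

Lemma degrees_of_regular_balanced_bipartite :
    0 < mindeg e -> regular_balanced_bipartite e ->
  (forall u, deg e u = mindeg e) /\ nedges e = indep_number e * mindeg e.
Proof.
move=> k_gt0 [[A [B [AB0 ABT AB_card bip]]] /regular_mindeg deg_k]; split=> //.
have B_eq : B = ~: A.
  apply/setP => u; move/setP/(_ u): AB0; move/setP/(_ u): ABT; rewrite !inE.
  by case: (u \in A); case: (u \in B).
have A_indep : independent e A.
  apply/independentP => x y xA yA; apply/negP => /bip.
  by rewrite B_eq !inE xA yA; case=> [][].
have m_eq : nedges e = #|A| * mindeg e.
  move: (handshake); rewrite (bigID_setC _ A) /= !(sum_deg_const _ deg_k).
  by rewrite -B_eq -AB_card; lia.
have [S S_indep S_card] := indep_number_attained.
have : indep_number e * mindeg e <= #|A| * mindeg e.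
  by rewrite -S_card -(sum_deg_const _ deg_k) -m_eq sum_deg_indep_le.
rewrite leq_pmul2r // m_eq => beta_le; congr (_ * _).
by apply/anti_leq; rewrite beta_le leq_indep_number.
Qed.

Lemma regular_balanced_bipartite_of_degrees :
    0 < mindeg e -> (forall u, deg e u = mindeg e) ->
    nedges e = indep_number e * mindeg e ->
  regular_balanced_bipartite e.
Proof.
move=> k_gt0 deg_k m_eq; split; last by move=> u v; rewrite !deg_k.
have [S S_indep S_card] := indep_number_attained.
have C_indep : independent e (~: S).
  by apply: indep_setC; rewrite // (sum_deg_const _ deg_k) S_card m_eq.
exists S, (~: S); split; rewrite ?setICr ?setUCr //.
  move: (handshake); rewrite (bigID_setC _ S) /= !(sum_deg_const _ deg_k) m_eq -S_card.
  by rewrite -mulnDl mulnA (mulnC 2) => /eqP; rewrite eqn_pmul2r // => /eqP; lia.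
move/independentP: S_indep => S_indep; move/independentP: C_indep => C_indep.
move=> x y xy; case: (boolP (x \in S)) => xS; [left | right]; split; rewrite ?inE //.
  by apply/negP => yS; move: (S_indep x y xS yS); rewrite xy.
by apply/negPn/negP => yS; move: (C_indep x y); rewrite !inE xy => /(_ xS yS).
Qed.

Lemma regular_balanced_bipartite_degrees : 0 < mindeg e ->
  regular_balanced_bipartite e <->
  (forall u, deg e u = mindeg e) /\ nedges e = indep_number e * mindeg e.
Proof.
move=> k_gt0; split=> [|[]]; first exact: degrees_of_regular_balanced_bipartite.
exact: regular_balanced_bipartite_of_degrees.
Qed.

Lemma indep_number_gt0 : 0 < #|T| -> 0 < indep_number e.
Proof.
case/card_gt0P => u _; apply: leq_trans (leq_indep_number (S := [set u]) _).
  by rewrite cards1.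
by apply/independentP => ? ? /set1P-> /set1P->; rewrite e_irr.
Qed.

End Graph.

Local Open Scope ring_scope.

Lemma pmulr_eq0 (R : numDomainType) (x y : R) : 0 < y -> (x * y == 0) = (x == 0).
Proof. by move=> y_gt0; rewrite mulf_eq0 (gt_eqF y_gt0) orbF. Qed.

Lemma bound_weaken (R : numDomainType) (P : Prop) (F r g : R) :
    0 <= g -> (P -> g = 0) -> r <= F /\ (F = r <-> P) ->
  r - g <= F /\ (F = r - g <-> P).
Proof.
move=> g_ge0 Pg [r_le_F F_r]; have r_g_le_r : r - g <= r by rewrite gerBl.
split; first exact: le_trans r_le_F.
split=> [F_eq | /[dup] /Pg -> /F_r ->]; last by rewrite subr0.
by apply/F_r/le_anti; rewrite r_le_F andbT F_eq.
Qed.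

Section DegreeSequence.
Variables (R : realFieldType) (I : finType) (S : {set I}) (x : I -> R).
Variables (d D m b n : R).
Hypothesis d_gt0 : 0 < d.
Hypothesis d_le_x : forall u, d <= x u.
Hypothesis x_le_D : forall u, x u <= D.
Hypothesis D_attained : exists u, x u = D.
Hypothesis card_I : #|I|%:R = n.
Hypothesis card_S : #|S|%:R = b.
Hypothesis S_neq0 : S != set0.
Hypothesis sum_S_le : \sum_(u in S) x u <= m.
Hypothesis sum_x : \sum_u x u = 2 * m.

Let d_le_D : d <= D. Proof. by case: D_attained => u <-. Qed.
Let D_gt0 : 0 < D. Proof. exact: lt_le_trans d_le_D. Qed.
Let x_gt0 u : 0 < x u. Proof. exact: lt_le_trans (d_le_x u). Qed.
Let b_gt0 : 0 < b. Proof. by rewrite -card_S ltr0n card_gt0. Qed.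

Lemma sum_const_set (A : {set I}) (c : R) : \sum_(u in A) c = #|A|%:R * c.
Proof. by rewrite sumr_const mulr_natl. Qed.

Lemma card_setC_S : #|~: S|%:R = n - b.
Proof. by rewrite -card_I -card_S -(cardsC S) natrD addrC addKr. Qed.

Lemma bd_le_m : b * d <= m.
Proof.
by rewrite -card_S -sum_const_set; apply: le_trans sum_S_le; apply: ler_sum.
Qed.

Lemma sum_setC (F : I -> R) :
  \sum_u F u = \sum_(u in S) F u + \sum_(u in ~: S) F u.
Proof. exact: bigID_setC. Qed.

Lemma m_le_sum_setC : m <= \sum_(u in ~: S) x u.
Proof. have := sum_S_le; move: sum_x; rewrite sum_setC; lra. Qed.

Lemma m_le_nbD : m <= (n - b) * D.
Proof.
rewrite -card_setC_S -sum_const_set; apply: le_trans m_le_sum_setC _.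
by apply: ler_sum.
Qed.

Lemma nb_gt0 : 0 < n - b.
Proof.
have : 0 < (n - b) * D.
  by apply: lt_le_trans m_le_nbD; apply: lt_le_trans bd_le_m; apply: mulr_gt0.
by rewrite pmulr_lgt0.
Qed.

Lemma sum_const (c : R) : \sum_(u : I) c = n * c.
Proof. by rewrite sumr_const -mulr_natl card_I. Qed.

Lemma sum_regular (f : R -> R) : (forall u, x u = d) -> \sum_u f (x u) = n * f d.
Proof. by move=> x_d; rewrite -sum_const; apply: eq_bigr => u _; rewrite x_d. Qed.

Lemma extremal_params : (forall u, x u = d) -> m = b * d -> D = d /\ n = 2 * b.
Proof.
move=> x_d m_bd; split; first by case: D_attained => u <-.
have : n * d = 2 * b * d by rewrite -(sum_regular id x_d) sum_x m_bd mulrA.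
by move/(mulIf (lt0r_neq0 d_gt0)).
Qed.

Lemma sum_sq_le : \sum_u x u ^+ 2 <= (n - b) * D ^+ 2 + D * m.
Proof.
rewrite sum_setC addrC; apply: lerD.
  rewrite -card_setC_S -sum_const_set; apply: ler_sum => u _.
  by apply: lerXn2r; rewrite ?nnegrE ?x_le_D ?ltW ?x_gt0 ?D_gt0.
apply: le_trans (_ : _ <= D * \sum_(u in S) x u) _; last by rewrite ler_pM2l.
rewrite mulr_sumr; apply: ler_sum => u _.
by rewrite expr2 ler_pM2r.
Qed.

Lemma zagreb1_bound :
  let r := (n - b) * D ^+ 2 + m ^+ 2 / (2 * b) + b * D ^+ 3 / (2 * d) in
  \sum_u x u ^+ 2 <= r /\ (\sum_u x u ^+ 2 = r <-> (forall u, x u = d) /\ m = b * d).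
Proof.
move=> r.
have c1_gt0 : 0 < (2 * b)^-1 by rewrite invr_gt0 mulr_gt0 ?ltr0n.
have c2_gt0 : 0 < b * D ^+ 2 / (2 * d).
  by rewrite divr_gt0 ?mulr_gt0 ?exprn_gt0 ?ltr0n.
have gap : r - ((n - b) * D ^+ 2 + D * m) =
    (m - b * D) ^+ 2 / (2 * b) + (D - d) * (b * D ^+ 2 / (2 * d)).
  by rewrite /r; field; rewrite !lt0r_neq0.
have gap1_ge0 : 0 <= (m - b * D) ^+ 2 / (2 * b) by rewrite mulr_ge0 ?sqr_ge0 ?ltW.
have gap2_ge0 : 0 <= (D - d) * (b * D ^+ 2 / (2 * d)).
  by rewrite mulr_ge0 ?subr_ge0 ?(ltW c2_gt0).
have base := sum_sq_le.
split; first by move: gap; lra.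
split=> [Z_eq | [x_d m_bd]]; last first.
  have [D_d n_2b] := extremal_params x_d m_bd.
  by rewrite (sum_regular (fun t => t ^+ 2)) // /r D_d n_2b m_bd; field; rewrite !lt0r_neq0.
have /andP[/eqP gap1 /eqP gap2] :
    ((m - b * D) ^+ 2 / (2 * b) == 0) && ((D - d) * (b * D ^+ 2 / (2 * d)) == 0).
  by rewrite -paddr_eq0 // -gap; apply/eqP; move: base; rewrite Z_eq; lra.
move/eqP: gap1; rewrite pmulr_eq0 // sqrf_eq0 subr_eq0 => /eqP m_bD.
move/eqP: gap2; rewrite pmulr_eq0 // subr_eq0 => /eqP D_d.
split; last by rewrite m_bD D_d.
by move=> u; apply: le_anti; rewrite d_le_x -D_d x_le_D.
Qed.

Lemma forgotten_bound :
  let r := (n - b) * d ^+ 3 + d * (2 * b ^+ 2 * d ^+ 2 - m ^+ 2) / b in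
  r <= \sum_u x u ^+ 3 /\ (\sum_u x u ^+ 3 = r <-> (forall u, x u = d) /\ m = b * d).
Proof.
move=> r.
have cube_le u : d ^+ 3 <= x u ^+ 3.
  by apply: lerXn2r; rewrite ?nnegrE ?d_le_x ?ltW ?x_gt0.
have base : n * d ^+ 3 <= \sum_u x u ^+ 3 by rewrite -sum_const; apply: ler_sum.
have c_gt0 : 0 < d * (m + b * d) / b.
  have := bd_le_m; have := mulr_gt0 b_gt0 d_gt0 => bd_gt0 bd_le.
  by rewrite divr_gt0 // mulr_gt0 //; lra.
have gap : n * d ^+ 3 - r = (m - b * d) * (d * (m + b * d) / b).
  by rewrite /r; field; rewrite lt0r_neq0.
have gap_ge0 : 0 <= (m - b * d) * (d * (m + b * d) / b).
  by rewrite mulr_ge0 ?subr_ge0 ?bd_le_m ?(ltW c_gt0).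
split; first by move: gap; lra.
split=> [F_eq | [x_d m_bd]]; last first.
  have [_ n_2b] := extremal_params x_d m_bd.
  by rewrite (sum_regular (fun t => t ^+ 3)) // /r n_2b m_bd; field; rewrite lt0r_neq0.
have F_nd : \sum_u x u ^+ 3 = n * d ^+ 3 by move: base gap_ge0; rewrite F_eq -gap; lra.
split; last first.
  apply/eqP; rewrite -subr_eq0 -(pmulr_eq0 _ c_gt0) -gap; apply/eqP.
  by rewrite -F_eq F_nd subrr.
have [_] := leif_sum (fun u (_ : true) => leif_eq (cube_le u)).
rewrite sum_const F_nd eqxx => /esym/forallP cubes u.
apply/eqP; rewrite -(eqrXn2 (n := 3)) ?ltW ?x_gt0 //.
by rewrite eq_sym; apply: cubes.
Qed.

Lemma forgotten_bound_weak :
  let r := (n - b) * d ^+ 3 + d / b *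
      (2 * b * (b * d ^+ 2 + m ^+ 2 / (n - b)) - m ^+ 2
       - 2 * b * (n - b) * D ^+ 2) in
  r <= \sum_u x u ^+ 3 /\ (\sum_u x u ^+ 3 = r <-> (forall u, x u = d) /\ m = b * d).
Proof.
move=> r.
have c_gt0 : 0 < 2 * d * ((n - b) * D + m) / (n - b).
  have := bd_le_m; have := mulr_gt0 nb_gt0 D_gt0; have := mulr_gt0 b_gt0 d_gt0.
  by move=> *; rewrite divr_gt0 ?mulr_gt0 ?ltr0n ?nb_gt0 //; lra.
have -> : r = (n - b) * d ^+ 3 + d * (2 * b ^+ 2 * d ^+ 2 - m ^+ 2) / b
    - ((n - b) * D - m) * (2 * d * ((n - b) * D + m) / (n - b)).
  by rewrite /r; field; rewrite !lt0r_neq0 ?nb_gt0.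
apply: bound_weaken forgotten_bound.
  by rewrite mulr_ge0 ?subr_ge0 ?m_le_nbD ?(ltW c_gt0).
move=> [x_d m_bd]; have [D_d n_2b] := extremal_params x_d m_bd.
by rewrite D_d n_2b m_bd (_ : (2 * b - b) * d - b * d = 0) ?mul0r //; ring.
Qed.

Lemma inv_degree_bound :
  let r := (n - b) / D + (2 * b ^+ 2 * d ^+ 2 - m ^+ 2) / (b * D ^+ 3) in
  r <= \sum_u (x u)^-1 /\ (\sum_u (x u)^-1 = r <-> (forall u, x u = d) /\ m = b * d).
Proof.
move=> r.
have base : n / D <= \sum_u (x u)^-1.
  by rewrite -sum_const; apply: ler_sum => u _; rewrite lef_pV2 ?posrE ?x_gt0.
have c1_gt0 : 0 < b * (D + d) / D ^+ 3.
  by rewrite divr_gt0 ?mulr_gt0 ?addr_gt0 ?exprn_gt0.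
have c2_gt0 : 0 < (m + b * d) / (b * D ^+ 3).
  have := bd_le_m; have := mulr_gt0 b_gt0 d_gt0 => bd_gt0 bd_le.
  by rewrite divr_gt0 ?mulr_gt0 ?exprn_gt0 //; lra.
have gap : n / D - r = (D - d) * (b * (D + d) / D ^+ 3) +
                       (m - b * d) * ((m + b * d) / (b * D ^+ 3)).
  by rewrite /r; field; rewrite !lt0r_neq0.
have gap1_ge0 : 0 <= (D - d) * (b * (D + d) / D ^+ 3).
  by rewrite mulr_ge0 ?subr_ge0 ?(ltW c1_gt0).
have gap2_ge0 : 0 <= (m - b * d) * ((m + b * d) / (b * D ^+ 3)).
  by rewrite mulr_ge0 ?subr_ge0 ?bd_le_m ?(ltW c2_gt0).
split; first by move: gap; lra.
split=> [Inv_eq | [x_d m_bd]]; last first.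
  have [D_d n_2b] := extremal_params x_d m_bd.
  by rewrite (sum_regular (fun t => t^-1)) // /r D_d n_2b m_bd; field; rewrite !lt0r_neq0.
have /andP[/eqP gap1 /eqP gap2] :
    ((D - d) * (b * (D + d) / D ^+ 3) == 0) &&
    ((m - b * d) * ((m + b * d) / (b * D ^+ 3)) == 0).
  by rewrite -paddr_eq0 // -gap; apply/eqP; move: base; rewrite Inv_eq; lra.
move/eqP: gap1; rewrite pmulr_eq0 // subr_eq0 => /eqP D_d.
move/eqP: gap2; rewrite pmulr_eq0 // subr_eq0 => /eqP m_bd.
by split=> // u; apply: le_anti; rewrite d_le_x -D_d x_le_D.
Qed.

Lemma inv_degree_bound_weak :
  let r := (n - b) / D + (b * D ^+ 3)^-1 *
      (2 * b * (b * d ^+ 2 + m ^+ 2 / (n - b)) - m ^+ 2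
       - 2 * b * (n - b) * D ^+ 2) in
  r <= \sum_u (x u)^-1 /\ (\sum_u (x u)^-1 = r <-> (forall u, x u = d) /\ m = b * d).
Proof.
move=> r.
have c_gt0 : 0 < 2 * ((n - b) * D + m) / ((n - b) * D ^+ 3).
  have := bd_le_m; have := mulr_gt0 nb_gt0 D_gt0; have := mulr_gt0 b_gt0 d_gt0.
  by move=> *; rewrite divr_gt0 ?mulr_gt0 ?ltr0n ?exprn_gt0 ?nb_gt0 //; lra.
have -> : r = (n - b) / D + (2 * b ^+ 2 * d ^+ 2 - m ^+ 2) / (b * D ^+ 3)
    - ((n - b) * D - m) * (2 * ((n - b) * D + m) / ((n - b) * D ^+ 3)).
  by rewrite /r; field; rewrite !lt0r_neq0 ?nb_gt0.
apply: bound_weaken inv_degree_bound.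
  by rewrite mulr_ge0 ?subr_ge0 ?m_le_nbD ?(ltW c_gt0).
move=> [x_d m_bd]; have [D_d n_2b] := extremal_params x_d m_bd.
by rewrite D_d n_2b m_bd (_ : (2 * b - b) * d - b * d = 0) ?mul0r //; ring.
Qed.

End DegreeSequence.

Lemma regular_balanced_bipartite_degrees_natr (R : numDomainType) (T : finType)
    (e : rel T) :
  simple_graph e -> (0 < mindeg e)%N ->
  (forall u, (deg e u)%:R = (mindeg e)%:R :> R) /\
    (nedges e)%:R = (indep_number e)%:R * (mindeg e)%:R :> R
  <-> regular_balanced_bipartite e.
Proof.
case=> e_sym e_irr k_gt0.
apply: iff_trans (iff_sym (regular_balanced_bipartite_degrees e_sym e_irr k_gt0)).
split=> -[deg_k m_eq]; split=> [u|].
- by apply/eqP; rewrite -(eqr_nat R); apply/eqP.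
- by apply/eqP; rewrite -(eqr_nat R) natrM; apply/eqP.
- by rewrite deg_k.
- by rewrite m_eq natrM.
Qed.

Theorem theorem1 (R : realFieldType) (T : finType) (e : rel T)
  (Hsimple : simple_graph e) (Hdelta : (1 <= mindeg e)%N) :
  let n : R := (nverts T)%:R in
  let m : R := (nedges e)%:R in
  let dl : R := (mindeg e)%:R in
  let Dl : R := (maxdeg e)%:R in
  let b : R := (indep_number e)%:R in
  let rhs1 := (n - b) * Dl ^+ 2 + m ^+ 2 / (2 * b) + b * Dl ^+ 3 / (2 * dl) in
  let rhs2 := (n - b) * dl ^+ 3 + dl * (2 * b ^+ 2 * dl ^+ 2 - m ^+ 2) / b in
  let rhs3 := (n - b) * dl ^+ 3 + dl / b *
      (2 * b * (b * dl ^+ 2 + m ^+ 2 / (n - b)) - m ^+ 2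
       - 2 * b * (n - b) * Dl ^+ 2) in
  let rhs4 := (n - b) / Dl + (2 * b ^+ 2 * dl ^+ 2 - m ^+ 2) / (b * Dl ^+ 3) in
  let rhs5 := (n - b) / Dl + (b * Dl ^+ 3)^-1 *
      (2 * b * (b * dl ^+ 2 + m ^+ 2 / (n - b)) - m ^+ 2
       - 2 * b * (n - b) * Dl ^+ 2) in
  [/\ zagreb1 e R <= rhs1 /\ (zagreb1 e R = rhs1 <-> regular_balanced_bipartite e),
      rhs2 <= forgotten e R /\ (forgotten e R = rhs2 <-> regular_balanced_bipartite e),
      rhs3 <= forgotten e R /\ (forgotten e R = rhs3 <-> regular_balanced_bipartite e),
      rhs4 <= inv_degree e R /\ (inv_degree e R = rhs4 <-> regular_balanced_bipartite e)
    & rhs5 <= inv_degree e R /\ (inv_degree e R = rhs5 <-> regular_balanced_bipartite e)].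
Proof.
move=> n m dl Dl b rhs1 rhs2 rhs3 rhs4 rhs5.
have [e_sym e_irr] := Hsimple.
have T_gt0 : (0 < #|T|)%N := leq_trans Hdelta (mindeg_le_card e).
have [S S_indep S_card] := indep_number_attained e.
have S_neq0 : S != set0 by rewrite -card_gt0 S_card indep_number_gt0.
pose x u : R := (deg e u)%:R.
have d_gt0 : 0 < dl by rewrite ltr0n.
have d_le_x u : dl <= x u by rewrite ler_nat mindeg_le_deg.
have x_le_D u : x u <= Dl by rewrite ler_nat leq_maxdeg.
have D_attained : exists u, x u = Dl.
  by have [u max_u] := maxdeg_attained e T_gt0; exists u; rewrite /x max_u.
have card_S : #|S|%:R = b by rewrite S_card.
have sum_S_le : \sum_(u in S) x u <= m by rewrite -natr_sum ler_nat sum_deg_indep_le.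
have sum_x : \sum_u x u = 2 * m by rewrite -natr_sum handshake // natrM.
have with_rbb (A P : Prop) : A /\ (P <-> (forall u, x u = dl) /\ m = b * dl) ->
    A /\ (P <-> regular_balanced_bipartite e).
  case=> a P_iff; split=> //; apply: iff_trans P_iff _.
  exact: regular_balanced_bipartite_degrees_natr.
split; apply: with_rbb.
- exact: zagreb1_bound d_gt0 d_le_x x_le_D D_attained (erefl _) card_S S_neq0
    sum_S_le sum_x.
- exact: forgotten_bound d_gt0 d_le_x D_attained (erefl _) card_S S_neq0 sum_S_le sum_x.
- exact: forgotten_bound_weak d_gt0 d_le_x x_le_D D_attained (erefl _) card_S S_neq0
    sum_S_le sum_x.
- exact: inv_degree_bound d_gt0 d_le_x x_le_D D_attained (erefl _) card_S S_neq0
    sum_S_le sum_x.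
- exact: inv_degree_bound_weak d_gt0 d_le_x x_le_D D_attained (erefl _) card_S S_neq0
    sum_S_le sum_x.
Qed.
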